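(* Let $\mathbb{F}$ be a finite field, $G\subseteq\mathbb{F}$, $m,k\in\mathbb{N}$, and $d,d'\in\mathbb{N}$ with $d'\ge 2(|G|-1)$. Suppose $S\subseteq\mathbb{F}^{m+k}$ is such that there exist coefficients $(c_{\vec\alpha})_{\vec\alpha\in\mathbb{F}^m}$ and $(d_{\vec q})_{\vec q\in S}$ in $\mathbb{F}$ with (i) for all $Z\in\mathbb{F}^{\le d,\le d'}[X_1,\dots,X_m,Y_1,\dots,Y_k]$: $\sum_{\vec\alpha\in\mathbb{F}^m}c_{\vec\alpha}\sum_{\vec y\in G^k}Z(\vec\alpha,\vec y)=\sum_{\vec q\in S}d_{\vec q}Z(\vec q)$, and (ii) there exists $Z'\in\mathbb{F}^{\le d,\le d'}[X_1,\dots,X_m,Y_1,\dots,Y_k]$ with $\sum_{\vec\alpha\in\mathbb{F}^m}c_{\vec\alpha}\sum_{\vec y\in G^k}Z'(\vec\alpha,\vec y)\ne 0$. Then $|S|\ge|G|^k$.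
   Context: $\mathbb{F}^{\le d,\le d'}[X_1,\dots,X_m,Y_1,\dots,Y_k]$ denotes the set of $(m+k)$-variate polynomials over $\mathbb{F}$ of individual degree at most $d$ in each of $X_1,\dots,X_m$ and at most $d'$ in each of $Y_1,\dots,Y_k$. *)

From HB Require Import structures.
From mathcomp Require Import all_boot all_order all_algebra all_fingroup all_field.
Set Implicit Arguments. Unset Strict Implicit. Unset Printing Implicit Defensive.
Import GRing.Theory.
Local Open Scope ring_scope.

(* Exponent vectors of monomials of F^{<=d,<=d'}[X_1..X_m,Y_1..Y_k]:
   exponent of X_i in {0..d}, exponent of Y_j in {0..d'}. *)
Definition iexps (m k d d' : nat) : finType :=
  ({ffun 'I_m -> 'I_d.+1} * {ffun 'I_k -> 'I_d'.+1})%type.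

Definition ipoly (F : fieldType) (m k d d' : nat) := iexps m k d d' -> F.

Definition peval (F : fieldType) (m k d d' : nat) (Z : ipoly F m k d d')
  (x : 'rV[F]_(m + k)) : F :=
  \sum_(e : iexps m k d d')
     Z e * (\prod_(i < m) x ord0 (lshift k i) ^+ e.1 i)
         * (\prod_(j < k) x ord0 (rshift m j) ^+ e.2 j).

Definition Gsum (F : finFieldType) (G : {set F}) (m k d d' : nat)
  (Z : ipoly F m k d d') (alpha : 'rV[F]_m) : F :=
  \sum_(y : 'rV[F]_k | [forall j, y ord0 j \in G]) peval Z (row_mx alpha y).

From HB Require Import structures.
From mathcomp Require Import all_boot all_order all_algebra all_fingroup all_field.
From mathcomp Require Import ring zify.
Set Implicit Arguments. Unset Strict Implicit. Unset Printing Implicit Defensive.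
Import GRing.Theory.
Local Open Scope ring_scope.

(* Pick y in G^k such that the X-polynomial W := Z'(X, y) has nonzero value
   A := sum_alpha c_alpha W(alpha).  For a grid point a in G^k and an exponent
   vector e in [0, |G|)^k, the test polynomial W(X) * prod_j delta_(a_j)(Y_j) Y_j^(e_j),
   with delta the Lagrange basis of G, has G-sum A * a^e.  Hypothesis (i) thus
   writes each row (a^e)_e of the |G|^k x |G|^k matrix of monomials evaluated
   on G^k as a combination of |S| rows indexed by S.  That matrix is invertible
   (its inverse is read off the coefficients of the tensor Lagrange basis), so
   |G|^k <= |S|. *)

Section RowPolynomials.
Variable F : fieldType.

Definition rmonomial (n p : nat) (e : {ffun 'I_n -> 'I_p}) (y : 'rV[F]_n) : F :=
  \prod_j y ord0 j ^+ e j.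

Definition rpoly_eval (n p : nat) (W : {ffun 'I_n -> 'I_p} -> F) (y : 'rV[F]_n) : F :=
  \sum_e W e * rmonomial e y.

Variables (m k d d' : nat).

Definition yslice (Z : ipoly F m k d d') (y : 'rV[F]_k) : {ffun 'I_m -> 'I_d.+1} -> F :=
  fun ex => rpoly_eval (fun ey => Z (ex, ey)) y.

Lemma peval_row_mx (Z : ipoly F m k d d') (a : 'rV[F]_m) (y : 'rV[F]_k) :
  peval Z (row_mx a y) = rpoly_eval (yslice Z y) a.
Proof.
rewrite /rpoly_eval; under eq_bigr do rewrite big_distrl /=.
rewrite pair_bigA /peval; apply: eq_bigr => -[ex ey] _ /=.
under eq_bigr do rewrite row_mxEl.
under [X in _ * _ * X = _]eq_bigr do rewrite row_mxEr.
rewrite /rmonomial; ring.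
Qed.

Lemma peval_separated (W : {ffun 'I_m -> 'I_d.+1} -> F) (P : 'I_k -> {poly F})
    (x : 'rV[F]_(m + k)) :
    (forall j, size (P j) <= d'.+1)%N ->
  peval (fun e : iexps m k d d' => W e.1 * \prod_j (P j)`_(e.2 j)) x
  = rpoly_eval W (lsubmx x) * \prod_j (P j).[rsubmx x ord0 j].
Proof.
move=> sizeP.
have hornerP j : (P j).[rsubmx x ord0 j] = \sum_(i < d'.+1) (P j)`_i * rsubmx x ord0 j ^+ i.
  exact: horner_coef_wide.
rewrite (eq_bigr _ (fun j _ => hornerP j)) bigA_distr_bigA /rpoly_eval big_distrl /=.
under eq_bigr do rewrite big_distrr /=.
rewrite pair_bigA /peval; apply: eq_bigr => -[ex ey] _ /=.
rewrite big_split /= /rmonomial.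
have -> : \prod_j lsubmx x ord0 j ^+ ex j = \prod_i x ord0 (lshift k i) ^+ ex i.
  by apply: eq_bigr => i _; rewrite mxE.
have -> : \prod_j rsubmx x ord0 j ^+ ey j = \prod_j x ord0 (rshift m j) ^+ ey j.
  by apply: eq_bigr => j _; rewrite mxE.
ring.
Qed.

End RowPolynomials.

Section LagrangeBasis.
Variables (F : fieldType) (s : seq F) (x : F).

Definition lagrange_basis : {poly F} :=
  (\prod_(y <- rem x s) (x - y))^-1 *: \prod_(y <- rem x s) ('X - y%:P).

Hypothesis xs : x \in s.

Lemma size_lagrange_basis : (size lagrange_basis <= size s)%N.
Proof.
apply: leq_trans (size_scale_leq _ _) _.
by rewrite size_prod_XsubC size_rem // prednK //; case: s xs.
Qed.

Lemma horner_lagrange_basis t : uniq s -> t \in s -> lagrange_basis.[t] = (t == x)%:R.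
Proof.
move=> us ts; rewrite hornerZ horner_prod.
under [X in _ * X]eq_bigr do rewrite hornerXsubC.
have [->|neq_tx] := eqVneq t x.
  rewrite mulVf // prodf_seq_eq0; apply/hasPn => y.
  by rewrite mem_rem_uniq // inE subr_eq0 eq_sym => /andP[].
apply/eqP; rewrite mulf_eq0 prodf_seq_eq0; apply/orP; right; apply/hasP; exists t.
  by rewrite mem_rem_uniq // inE neq_tx.
by rewrite subrr eqxx.
Qed.

End LagrangeBasis.

Lemma unitmx_factor_leq (F : fieldType) (n p : nat) (A : 'M[F]_n) (B : 'M[F]_(n, p))
    (C : 'M[F]_(p, n)) :
  A \in unitmx -> A = B *m C -> (n <= p)%N.
Proof.
move=> Aunit defA; rewrite -(mxrank_unit Aunit) defA.
exact: leq_trans (mxrankM_maxl _ _) (rank_leq_col _).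
Qed.

Section GridInterpolation.
Variables (F : fieldType) (s : seq F) (k : nat).
Hypothesis s_uniq : uniq s.
Local Notation J := {ffun 'I_k -> 'I_(size s)}.

Definition grid_point (a : J) : 'rV[F]_k := \row_j s`_(a j).

Definition grid_lagrange (a : J) (j : 'I_k) : {poly F} := lagrange_basis s s`_(a j).

Definition grid_delta (a : J) (y : 'rV[F]_k) : F := \prod_j (grid_lagrange a j).[y ord0 j].

Lemma grid_point_in (a : J) j : grid_point a ord0 j \in s.
Proof. by rewrite mxE mem_nth. Qed.

Lemma size_grid_lagrange (a : J) j : (size (grid_lagrange a j) <= size s)%N.
Proof. exact/size_lagrange_basis/mem_nth. Qed.

Lemma grid_delta_point (a a' : J) : grid_delta a' (grid_point a) = (a == a')%:R.
Proof.
rewrite /grid_delta.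
under eq_bigr do rewrite horner_lagrange_basis ?mem_nth ?grid_point_in // mxE nth_uniq //.
have [->|neq_aa'] := eqVneq a a'; first by rewrite big1 // => j _; rewrite eqxx.
have [j neq_j] : exists j, a j != a' j.
  apply/existsP; rewrite -negb_forall; apply: contra neq_aa' => /forallP eq_a.
  by apply/eqP/ffunP => j; apply/eqP.
by rewrite (bigD1 j) //= (negbTE (neq_j : val (a j) != val (a' j))) mul0r.
Qed.

Lemma grid_delta_off (a : J) (y : 'rV[F]_k) :
  (forall j, y ord0 j \in s) -> y != grid_point a -> grid_delta a y = 0.
Proof.
move=> ys neq_y.
have [j neq_j] : exists j, y ord0 j != s`_(a j).
  apply/existsP; rewrite -negb_forall; apply: contra neq_y => /forallP eq_y.
  by apply/eqP/rowP => j; rewrite [RHS]mxE; apply/eqP.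
by rewrite /grid_delta (bigD1 j) //= horner_lagrange_basis ?mem_nth // (negbTE neq_j) mul0r.
Qed.

Lemma grid_delta_expand (a : J) (y : 'rV[F]_k) :
  grid_delta a y = \sum_(e : J) rmonomial e y * \prod_j (grid_lagrange a j)`_(e j).
Proof.
have hornerL j : (grid_lagrange a j).[y ord0 j]
    = \sum_(i < size s) (grid_lagrange a j)`_i * y ord0 j ^+ i.
  exact/horner_coef_wide/size_grid_lagrange.
rewrite /grid_delta (eq_bigr _ (fun j _ => hornerL j)) bigA_distr_bigA.
by apply: eq_bigr => e _; rewrite /rmonomial -big_split; apply: eq_bigr => j _; rewrite mulrC.
Qed.

Lemma grid_monomial_mx_unit :
  \matrix_(r < #|J|, c < #|J|) rmonomial (enum_val c) (grid_point (enum_val r)) \in unitmx.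
Proof.
pose D := \matrix_(c < #|J|, r < #|J|) \prod_j (grid_lagrange (enum_val r) j)`_(enum_val c j).
set M := \matrix_(r, c) _.
suff /mulmx1_unit[] : M *m D = 1%:M by [].
apply/matrixP => r r'; rewrite !mxE.
rewrite (reindex (@enum_rank J)) /=; last exact/onW_bij/enum_rank_bij.
under eq_bigr do rewrite !mxE enum_rankK.
by rewrite -grid_delta_expand grid_delta_point (inj_eq enum_val_inj).
Qed.

Lemma card_grid_leq (T : finType) (S : {set T}) (y : T -> 'rV[F]_k) (f : J -> T -> F) :
    (forall a e : J, rmonomial e (grid_point a) = \sum_(t in S) f a t * rmonomial e (y t)) ->
  (size s ^ k <= #|S|)%N.
Proof.
move=> span_grid.
have <- : #|J| = (size s ^ k)%N by rewrite card_ffun !card_ord.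
apply: (unitmx_factor_leq grid_monomial_mx_unit
  (B := \matrix_(r < #|J|, i < #|S|) f (enum_val r) (enum_val i))
  (C := \matrix_(i < #|S|, c < #|J|) rmonomial (enum_val c) (y (enum_val i)))).
apply/matrixP => r c; rewrite !mxE span_grid big_enum_val.
by apply: eq_bigr => i _; rewrite !mxE.
Qed.

End GridInterpolation.

Section Corollary.
Variables (F : finFieldType) (G : {set F}) (m k d d' : nat).
Hypothesis hd' : (2 * (#|G| - 1) <= d')%N.
Local Notation J := {ffun 'I_k -> 'I_(size (enum G))}.

(* Its degree in each Y_j is at most 2(|G| - 1): this is where the bound on d' is used. *)
Definition grid_test_poly (W : {ffun 'I_m -> 'I_d.+1} -> F) (a e : J) : ipoly F m k d d' :=
  fun ex => W ex.1 * \prod_j (grid_lagrange a j * 'X^(e j))`_(ex.2 j).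

Lemma peval_grid_test_poly (W : {ffun 'I_m -> 'I_d.+1} -> F) (a e : J) (x : 'rV[F]_(m + k)) :
  peval (grid_test_poly W a e) x
  = rpoly_eval W (lsubmx x) * (grid_delta a (rsubmx x) * rmonomial e (rsubmx x)).
Proof.
rewrite peval_separated => [|j].
  rewrite /grid_delta /rmonomial -big_split; congr (_ * _).
  by apply: eq_bigr => j _; rewrite hornerM hornerXn.
apply: leq_trans (size_polyMleq _ _) _; rewrite size_polyXn.
have lt_e : (e j < #|G|)%N by rewrite cardE.
have le_L : (size (grid_lagrange a j) <= #|G|)%N by rewrite cardE size_grid_lagrange.
lia.
Qed.

Lemma Gsum_grid_test_poly (W : {ffun 'I_m -> 'I_d.+1} -> F) (a e : J) (al : 'rV[F]_m) :
  Gsum G (grid_test_poly W a e) al = rpoly_eval W al * rmonomial e (grid_point a).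
Proof.
have pt_in : [forall j, grid_point a ord0 j \in G].
  by apply/forallP => j; rewrite -mem_enum grid_point_in.
rewrite /Gsum (bigD1 _ pt_in) /= big1 ?addr0 => [|y /andP[/forallP yG neq_y]];
  rewrite peval_grid_test_poly row_mxKl row_mxKr.
  by rewrite grid_delta_point ?enum_uniq // eqxx mul1r.
by rewrite grid_delta_off ?enum_uniq // => [|j]; rewrite ?mul0r ?mulr0 ?mem_enum.
Qed.

Lemma Gsum_yslices (c : 'rV[F]_m -> F) (Z : ipoly F m k d d') :
  \sum_al c al * Gsum G Z al
  = \sum_(y : 'rV[F]_k | [forall j, y ord0 j \in G]) \sum_al c al * rpoly_eval (yslice Z y) al.
Proof.
under eq_bigr do rewrite /Gsum big_distrr /=.
by rewrite exchange_big; apply: eq_bigr => y _; apply: eq_bigr => al _; rewrite peval_row_mx.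
Qed.

Variables (S : {set 'rV[F]_(m + k)}) (c : 'rV[F]_m -> F) (dq : 'rV[F]_(m + k) -> F).
Hypothesis c_dq_exact : forall Z : ipoly F m k d d',
  \sum_al c al * Gsum G Z al = \sum_(q in S) dq q * peval Z q.

Lemma grid_monomial_span (W : {ffun 'I_m -> 'I_d.+1} -> F) (a e : J) :
  (\sum_al c al * rpoly_eval W al) * rmonomial e (grid_point a)
  = \sum_(q in S) dq q * rpoly_eval W (lsubmx q) * grid_delta a (rsubmx q)
                  * rmonomial e (rsubmx q).
Proof.
rewrite big_distrl /=.
under eq_bigr do rewrite -mulrA -Gsum_grid_test_poly.
rewrite c_dq_exact; apply: eq_bigr => q _.
by rewrite peval_grid_test_poly !mulrA.
Qed.

End Corollary.

Theorem corollary8p2 (F : finFieldType) (G : {set F}) (m k d d' : nat)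
  (hd' : (2 * (#|G| - 1) <= d')%N) (S : {set 'rV[F]_(m + k)}) :
  (exists (c : 'rV[F]_m -> F) (dq : 'rV[F]_(m + k) -> F),
     (forall Z : ipoly F m k d d',
        \sum_(alpha : 'rV[F]_m) c alpha * Gsum G Z alpha
        = \sum_(q in S) dq q * peval Z q)
     /\ (exists Z' : ipoly F m k d d',
           \sum_(alpha : 'rV[F]_m) c alpha * Gsum G Z' alpha != 0)) ->
  (#|G| ^ k <= #|S|)%N.
Proof.
case=> c [dq [c_dq_exact [Z' Z'_neq0]]].
have [y AW_neq0] : exists y, \sum_al c al * rpoly_eval (yslice Z' y) al != 0.
  apply/existsP; rewrite -negb_forall; apply: contra Z'_neq0 => /forallP slices0.
  by rewrite Gsum_yslices big1 // => y _; apply/eqP/slices0.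
set AW := \sum_al _ in AW_neq0.
rewrite [#|G|]cardE.
apply: (card_grid_leq (enum_uniq G) (y := rsubmx)
  (f := fun a q => AW^-1 * dq q * rpoly_eval (yslice Z' y) (lsubmx q) * grid_delta a (rsubmx q))).
move=> a e; apply: (mulfI AW_neq0).
rewrite (grid_monomial_span hd' c_dq_exact) big_distrr; apply: eq_bigr => q _.
by rewrite /= -!mulrA mulVKf.
Qed.
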